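(* Let $f_1=(a_1,\lambda_1),\dots,f_p=(a_p,\lambda_p)\in\mathcal{H}(n,\mathbb{C})\setminus\mathcal{SR}_n$ and let $G$ be the subgroup of $\mathcal{H}(n,\mathbb{C})$ generated by $f_1,\dots,f_p$. Then $E_G$ is the complex affine subspace of $\mathbb{C}^n$ generated by $\{a_1,\dots,a_p\}$.
   Context: $\mathcal{H}(n,\mathbb{C})$ is the group of maps $z\mapsto\lambda z+b$ of $\mathbb{C}^n$ with $\lambda\in\mathbb{C}^*$, $b\in\mathbb{C}^n$; $\mathcal{T}_n$ = translations. For $a\in\mathbb{C}^n$, $\lambda\in\mathbb{C}\setminus\{0,1\}$, $(a,\lambda)$ denotes $z\mapsto\lambda(z-a)+a$, with unique fixed point (center) $a$. $H_2=(\frac{\pi}{2}+\pi\mathbb{Z})\cup\pi\mathbb{Z}$, $F_2=\{e^{ix}:x\in H_2\}$, $H_3=(\frac{\pi}{3}+\pi\mathbb{Z})\cup(-\frac{\pi}{3}+\pi\mathbb{Z})\cup\pi\mathbb{Z}$, $F_3=\{e^{ix}:x\in H_3\}$; $\mathcal{S}_i\mathcal{R}_n=\{z\mapsto\lambda z+b:\lambda\in F_i, b\in\mathbb{C}^n\}$, $\mathcal{SR}_n=\mathcal{S}_2\mathcal{R}_n\cup\mathcal{S}_3\mathcal{R}_n$. For a subgroup $G$, $\Gamma_G$ is the set of centers of elements of $G\setminus\mathcal{T}_n$ and $E_G$ is the smallest complex affine subspace of $\mathbb{C}^n$ containing $\Gamma_G$. *)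

From Stdlib Require Import Reals ZArith.
From Stdlib Require Fin.
Open Scope R_scope.

Definition CC : Type := (R * R)%type.
Definition Czero : CC := (0, 0).
Definition Cone : CC := (1, 0).
Definition Cadd (z w : CC) : CC := (fst z + fst w, snd z + snd w).
Definition Copp (z : CC) : CC := (- fst z, - snd z).
Definition Csub (z w : CC) : CC := Cadd z (Copp w).
Definition Cmul (z w : CC) : CC :=
  (fst z * fst w - snd z * snd w, fst z * snd w + snd z * fst w).
Definition Cinv (z : CC) : CC :=
  (fst z / (fst z ^ 2 + snd z ^ 2), - snd z / (fst z ^ 2 + snd z ^ 2)).
Definition cexpi (x : R) : CC := (cos x, sin x).

Definition vec (n : nat) : Type := Fin.t n -> CC.
Definition vzero {n} : vec n := fun _ => Czero.
Definition vadd {n} (x y : vec n) : vec n := fun i => Cadd (x i) (y i).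
Definition vsub {n} (x y : vec n) : vec n := fun i => Csub (x i) (y i).
Definition vscale {n} (c : CC) (x : vec n) : vec n := fun i => Cmul c (x i).

Definition H2 (x : R) : Prop :=
  exists k : Z, x = PI / 2 + IZR k * PI \/ x = IZR k * PI.
Definition F2 (l : CC) : Prop := exists x, H2 x /\ l = cexpi x.
Definition H3 (x : R) : Prop :=
  exists k : Z, x = PI / 3 + IZR k * PI \/ x = - (PI / 3) + IZR k * PI
                \/ x = IZR k * PI.
Definition F3 (l : CC) : Prop := exists x, H3 x /\ l = cexpi x.

(* An element z |-> l z + b of H(n,CC) (l <> 0) is represented by (l, b).
   It lies in SR_n iff l \in F_2 \/ l \in F_3. *)
Definition in_SR (l : CC) : Prop := F2 l \/ F3 l.

(* The element (a, l) : z |-> l (z - a) + a, i.e. the pair (l, (1 - l) a). *)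
Definition hom_b {n} (a : vec n) (l : CC) : vec n := vscale (Csub Cone l) a.

(* composition: (l1,b1) o (l2,b2) = (l1 l2, l1 b2 + b1);
   inverse:     (l,b)^{-1} = (l^{-1}, - l^{-1} b). *)
Inductive InGen (n p : nat) (a : nat -> vec n) (lam : nat -> CC)
  : CC -> vec n -> Prop :=
| InGen_id : InGen n p a lam Cone vzero
| InGen_gen : forall k, (k < p)%nat -> InGen n p a lam (lam k) (hom_b (a k) (lam k))
| InGen_comp : forall l1 b1 l2 b2,
    InGen n p a lam l1 b1 -> InGen n p a lam l2 b2 ->
    InGen n p a lam (Cmul l1 l2) (vadd (vscale l1 b2) b1)
| InGen_inv : forall l b,
    InGen n p a lam l b -> InGen n p a lam (Cinv l) (vscale (Copp (Cinv l)) b).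

Definition Gamma (n p : nat) (a : nat -> vec n) (lam : nat -> CC) (x : vec n) : Prop :=
  exists l b, InGen n p a lam l b /\ l <> Cone /\ vadd (vscale l x) b = x.

Definition is_linsub {n} (V : vec n -> Prop) : Prop :=
  V vzero /\ (forall x y, V x -> V y -> V (vadd x y))
  /\ (forall c x, V x -> V (vscale c x)).
Definition is_affine {n} (S : vec n -> Prop) : Prop :=
  (forall x, ~ S x) \/
  exists (q : vec n) (V : vec n -> Prop), is_linsub V /\ forall x, S x <-> V (vsub x q).
Definition aff_hull {n} (A : vec n -> Prop) (x : vec n) : Prop :=
  forall S, is_affine S -> (forall y, A y -> S y) -> S x.

From Stdlib Require Import Reals ZArith Lra FunctionalExtensionality.
Open Scope R_scope.

(* Write g = (l, b) for the map x |-> l x + b.  Let S = q + V be an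
   affine subspace containing every center a_k.  For g in G, the displacement
   g(q) - q lies in V: for a generator (a_k, l_k) it is (1 - l_k)(a_k - q), and
   it transforms as  g1 g2 (q) - q = l1 (g2(q) - q) + (g1(q) - q)  under
   composition and as  g^-1(q) - q = -l^-1 (g(q) - q)  under inversion.  If x
   is the center of g with l <> 1, then  x - q = (1 - l)^-1 (g(q) - q),  so x is
   in S: every affine subspace containing the a_k contains Gamma_G.  (When S is
   empty there are no generators, G consists of translations and Gamma_G is
   empty.)  Conversely each a_k is the center of the generator (a_k, l_k) with
   l_k <> 1, so a_k is in Gamma_G. *)

Definition Cnorm2 (z : CC) : R := fst z ^ 2 + snd z ^ 2.

Definition act {n} (l : CC) (b : vec n) (x : vec n) : vec n := vadd (vscale l x) b.

Ltac cunfold :=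
  unfold act, hom_b, vsub, vadd, vscale, vzero,
    Csub, Cinv, Cnorm2, Cmul, Cadd, Copp, Czero, Cone in *; cbn [fst snd] in *.

Lemma pair_eq (a b c d : R) : a = c -> b = d -> (a, b) = (c, d).
Proof. intros; subst; reflexivity. Qed.

Lemma Cnorm2_neq0 (z : CC) : z <> Czero -> Cnorm2 z <> 0.
Proof.
  destruct z as [u v]; unfold Cnorm2, Czero; cbn [fst snd]; intros Hz E; apply Hz.
  assert (u = 0) by nra; assert (v = 0) by nra; subst; reflexivity.
Qed.

Lemma Csub_one_neq0 (l : CC) : l <> Cone -> Cnorm2 (Csub Cone l) <> 0.
Proof.
  intros Hl; apply Cnorm2_neq0; intro E; apply Hl.
  cunfold; destruct l as [u v]; cbn [fst snd] in *; injection E; intros; apply pair_eq; lra.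
Qed.

Lemma InGen_mult_neq0 n p (a : nat -> vec n) (lam : nat -> CC)
  (Hlam0 : forall k, (k < p)%nat -> lam k <> Czero) :
  forall l b, InGen n p a lam l b -> Cnorm2 l <> 0.
Proof.
  induction 1 as [| k Hk | l1 b1 l2 b2 _ IH1 _ IH2 | l b _ IH].
  - cunfold; lra.
  - now apply Cnorm2_neq0, Hlam0.
  - replace (Cnorm2 (Cmul l1 l2)) with (Cnorm2 l1 * Cnorm2 l2)
      by (cunfold; destruct l1, l2; cbn [fst snd] in *; ring).
    now apply Rmult_integral_contrapositive.
  - cunfold; destruct l as [u v]; cbn [fst snd] in *.
    replace ((u / (u ^ 2 + v ^ 2)) ^ 2 + (- v / (u ^ 2 + v ^ 2)) ^ 2)
      with (/ (u ^ 2 + v ^ 2)) by (field; exact IH).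
    now apply Rinv_neq_0_compat.
Qed.

Lemma displacement_gen n (a q : vec n) (l : CC) :
  vsub (act l (hom_b a l) q) q = vscale (Csub Cone l) (vsub a q).
Proof.
  apply functional_extensionality; intro i.
  cunfold; destruct (a i), (q i), l; cbn [fst snd] in *; apply pair_eq; ring.
Qed.

Lemma displacement_comp n (q b1 b2 : vec n) (l1 l2 : CC) :
  vsub (act (Cmul l1 l2) (vadd (vscale l1 b2) b1) q) q
  = vadd (vscale l1 (vsub (act l2 b2 q) q)) (vsub (act l1 b1 q) q).
Proof.
  apply functional_extensionality; intro i.
  cunfold; destruct (q i), (b1 i), (b2 i), l1, l2; cbn [fst snd] in *; apply pair_eq; ring.
Qed.

Lemma displacement_inv n (q b : vec n) (l : CC) : Cnorm2 l <> 0 ->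
  vsub (act (Cinv l) (vscale (Copp (Cinv l)) b) q) q
  = vscale (Copp (Cinv l)) (vsub (act l b q) q).
Proof.
  intro Hl; apply functional_extensionality; intro i.
  cunfold; destruct (q i), (b i), l as [u v]; cbn [fst snd] in *.
  apply pair_eq; field; exact Hl.
Qed.

Lemma displacement_in_linsub n p (a : nat -> vec n) (lam : nat -> CC)
  (q : vec n) (V : vec n -> Prop) (HV : is_linsub V)
  (Hlam0 : forall k, (k < p)%nat -> lam k <> Czero)
  (Ha : forall k, (k < p)%nat -> V (vsub (a k) q)) :
  forall l b, InGen n p a lam l b -> V (vsub (act l b q) q).
Proof.
  destruct HV as [V0 [VA VS]].
  induction 1 as [| k Hk | l1 b1 l2 b2 _ IH1 _ IH2 | l b Hg IH].
  - replace (vsub (act Cone vzero q) q) with (@vzero n); [exact V0|].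
    apply functional_extensionality; intro i; cunfold; destruct (q i); cbn [fst snd] in *.
    apply pair_eq; ring.
  - rewrite displacement_gen; auto.
  - rewrite displacement_comp; auto.
  - rewrite displacement_inv by exact (InGen_mult_neq0 _ _ _ _ Hlam0 _ _ Hg).
    auto.
Qed.

Lemma center_from_displacement n (l : CC) (b x q : vec n) :
  l <> Cone -> act l b x = x ->
  vsub x q = vscale (Cinv (Csub Cone l)) (vsub (act l b q) q).
Proof.
  intros Hl Hfix.
  pose proof (Csub_one_neq0 l Hl) as Hnz.
  apply functional_extensionality; intro i.
  pose proof (equal_f Hfix i) as Hi.
  cunfold; destruct (b i), (x i), (q i), l as [u v]; cbn [fst snd] in *.
  injection Hi; intros; apply pair_eq; field_simplify_eq; try nra; exact Hnz.
Qed.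

Lemma InGen_no_gen_translation n p (a : nat -> vec n) (lam : nat -> CC)
  (Hp : forall k, ~ (k < p)%nat) :
  forall l b, InGen n p a lam l b -> l = Cone.
Proof.
  induction 1 as [| k Hk | l1 b1 l2 b2 _ IH1 _ IH2 | l b _ IH].
  - reflexivity.
  - exfalso; exact (Hp k Hk).
  - subst; cunfold; apply pair_eq; ring.
  - subst; cunfold; apply pair_eq; field.
Qed.

Lemma Gamma_in_affine n p (a : nat -> vec n) (lam : nat -> CC)
  (Hlam0 : forall k, (k < p)%nat -> lam k <> Czero)
  (S : vec n -> Prop) (HS : is_affine S)
  (Ha : forall k, (k < p)%nat -> S (a k)) :
  forall x, Gamma n p a lam x -> S x.
Proof.
  intros x [l [b [Hg [Hl Hfix]]]].
  destruct HS as [Hempty | [q [V [HV HSV]]]].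
  - exfalso; apply Hl.
    apply (InGen_no_gen_translation n p a lam) with (b := b); [|exact Hg].
    intros k Hk; exact (Hempty (a k) (Ha k Hk)).
  - apply HSV; rewrite (center_from_displacement n l b x q Hl Hfix).
    assert (Vscale : forall c v, V v -> V (vscale c v)) by apply HV.
    apply Vscale, (displacement_in_linsub n p a lam q V HV Hlam0)
      with (l := l); [|exact Hg].
    intros k Hk; apply HSV, Ha, Hk.
Qed.

Lemma center_in_Gamma n p (a : nat -> vec n) (lam : nat -> CC) k :
  (k < p)%nat -> lam k <> Cone -> Gamma n p a lam (a k).
Proof.
  intros Hk Hl; exists (lam k), (hom_b (a k) (lam k)).
  split; [now constructor | split; [exact Hl |]].
  apply functional_extensionality; intro i.
  cunfold; destruct (a k i), (lam k); cbn [fst snd] in *; apply pair_eq; ring.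
Qed.

Lemma aff_hull_incl n (A B : vec n -> Prop) :
  (forall S, is_affine S -> (forall y, B y -> S y) -> forall y, A y -> S y) ->
  forall x, aff_hull A x -> aff_hull B x.
Proof. intros HAB x Hx S HS HB; exact (Hx S HS (HAB S HS HB)). Qed.

Theorem lemma2p7 (n p : nat) (a : nat -> vec n) (lam : nat -> CC)
  (Hlam0 : forall k, (k < p)%nat -> lam k <> Czero)
  (Hlam1 : forall k, (k < p)%nat -> lam k <> Cone)
  (HSR : forall k, (k < p)%nat -> ~ in_SR (lam k)) :
  forall x : vec n,
    aff_hull (Gamma n p a lam) x <->
    aff_hull (fun y => exists k, (k < p)%nat /\ y = a k) x.
Proof.
  intro x; split; apply aff_hull_incl; intros S HS Hsub.
  - apply (Gamma_in_affine n p a lam Hlam0 S HS).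
    intros k Hk; apply Hsub; eauto.
  - intros y [k [Hk ->]]; apply Hsub, center_in_Gamma; auto.
Qed.
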